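(* Let $\mathcal C$ be a Clifford circuit with $m$ measurements. The map $\mathbb Z_2^m\to\overline{\mathcal P}_{n(\Delta+1)}$, $u\mapsto\overleftarrow{F(u)}$, is an injective group morphism.
   Context: A Clifford circuit on $n$ qubits is a finite sequence of operations, each a unitary Clifford gate or the measurement of a Hermitian $n$-qubit Pauli, each with a level in $\{1,2,\dots\}$; operations of equal level have disjoint supports and levels are nondecreasing; depth $\Delta$ = maximal level. In circuit order the $j$-th measurement measures $S_j$ at level $\ell_j$, $j=1,\dots,m$. $\overline{\mathcal P}_N$ is the $N$-qubit Pauli group modulo phases. $U_\ell$ is the product of the unitary gates of level $\ell$ (identity if none). A fault operator $F\in\overline{\mathcal P}_{n(\Delta+1)}$ acts on qubits $(\ell+0.5,q)$, $0\le\ell\le\Delta$, $1\le q\le n$; $F_{\ell+0.5}$ is its level-$(\ell+0.5)$ component; $\eta_{\ell+0.5}(P)$ is the fault operator equal to $P\in\overline{\mathcal P}_n$ at level $\ell+0.5$ and $I$ elsewhere. Back-cumulant $\overleftarrow F$: start with $\overleftarrow F=F$; for $\ell=\Delta,\dots,1$ replace $\overleftarrow F_{\ell-0.5}$ by $\overleftarrow F_{\ell-0.5}\cdot U_\ell^{-1}\overleftarrow F_{\ell+0.5}U_\ell$. For $u\in\mathbb Z_2^m$, $F(u)=\prod_{j=1}^m\eta_{\ell_j-0.5}(S_j^{u_j})$. *)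

From HB Require Import structures.
From mathcomp Require Import all_boot all_order all_algebra.
Set Implicit Arguments. Unset Strict Implicit. Unset Printing Implicit Defensive.
Import GRing.Theory.
Local Open Scope ring_scope.

(* n-qubit Pauli operators modulo phases: each qubit carries (x,z) in F_2^2;
   multiplication modulo phases is componentwise addition. *)
Definition pauli (n : nat) := {ffun 'I_n -> 'F_2 * 'F_2}.

Definition psupport n (P : pauli n) : {set 'I_n} := [set q | P q != 0].

(* symplectic form: commutation (0) / anticommutation (1) *)
Definition symp n (P Q : pauli n) : 'F_2 :=
  \sum_(q < n) ((P q).1 * (Q q).2 + (P q).2 * (Q q).1).

(* g : P |-> G^{-1} P G (modulo phases) is the conjugation action of a
   unitary Clifford gate G supported on A (G = G_A (x) I).  The mod-phase
   conjugation actions of Clifford unitaries are exactly the symplectic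
   automorphisms of F_2^{2n}; G acting trivially outside A means g fixes Paulis
   supported outside A and maps Paulis supported in A into Paulis supported in A. *)
Definition clifford_action n (A : {set 'I_n}) (g : pauli n -> pauli n) : Prop :=
  [/\ {morph g : P Q / P + Q},
      bijective g,
      (forall P Q, symp (g P) (g Q) = symp P Q),
      (forall P, [disjoint psupport P & A] -> g P = P) &
      (forall P, psupport P \subset A -> psupport (g P) \subset A)].

Inductive op (n : nat) :=
| Gate of {set 'I_n} & (pauli n -> pauli n)
| Meas of pauli n.

Definition op_support n (o : op n) : {set 'I_n} :=
  match o with Gate A _ => A | Meas Sm => psupport Sm end.

(* a circuit: the list of its operations in circuit order, each with a level *)
Definition circuit (n : nat) := seq (op n * nat).

Definition in_circ n (o : op n * nat) (c : circuit n) : Prop :=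
  exists2 i, (i < size c)%N & nth (Meas 0, 0%N) c i = o.

Definition valid_circuit n (c : circuit n) : Prop :=
  [/\ all (fun o => 0 < o.2)%N c,
      sorted (fun a b : op n * nat => a.2 <= b.2)%N c,
      (forall i j, (i < j < size c)%N ->
         (nth (Meas 0, 0%N) c i).2 = (nth (Meas 0, 0%N) c j).2 ->
         [disjoint op_support (nth (Meas 0, 0%N) c i).1
                 & op_support (nth (Meas 0, 0%N) c j).1]),
      (forall A g l, in_circ (Gate A g, l) c -> clifford_action A g) &
      (forall Sm l, in_circ (Meas Sm, l) c -> Sm != 0)].

Definition depth n (c : circuit n) : nat := foldr (fun o d => maxn o.2 d) 0%N c.

Definition meas_list n (c : circuit n) : seq (pauli n * nat) :=
  pmap (fun o : op n * nat => if o.1 is Meas Sm then Some (Sm, o.2) else None) c.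

Definition nmeas n (c : circuit n) : nat := size (meas_list c).

Definition meas_S n (c : circuit n) (j : nat) : pauli n := (nth (0, 0%N) (meas_list c) j).1.
Definition meas_l n (c : circuit n) (j : nat) : nat := (nth (0, 0%N) (meas_list c) j).2.

(* P |-> U_l^{-1} P U_l, U_l the product of the gates of level l *)
Definition gates_at n (c : circuit n) (l : nat) : seq (pauli n -> pauli n) :=
  pmap (fun o : op n * nat =>
          if o.1 is Gate _ g then (if o.2 == l then Some g else None) else None) c.

Definition conjU n (c : circuit n) (l : nat) (P : pauli n) : pauli n :=
  foldl (fun Q g => g Q) P (gates_at c l).

(* fault operators: component i : 'I_(Delta+1) is the level (i+0.5) part *)
Definition fault n (c : circuit n) := {ffun 'I_(depth c).+1 -> pauli n}.

Definition back_step n (c : circuit n) (l : nat) (F : fault c) : fault c :=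
  [ffun i : 'I_(depth c).+1 =>
     if nat_of_ord i == l.-1 then F i + conjU c l (F (inord l)) else F i].

Definition back_cumulant n (c : circuit n) (F : fault c) : fault c :=
  foldl (fun G l => @back_step n c l G) F (rev (iota 1 (depth c))).

Definition F_of n (c : circuit n) (u : {ffun 'I_(nmeas c) -> 'F_2}) : fault c :=
  [ffun i : 'I_(depth c).+1 =>
     \sum_(j < nmeas c | (meas_l c j).-1 == nat_of_ord i)
        (if u j == 1 then meas_S c j else 0)].

From mathcomp Require Import all_boot all_order all_algebra.
Import GRing.Theory.
Set Implicit Arguments. Unset Strict Implicit. Unset Printing Implicit Defensive.
Local Open Scope ring_scope.

(* Each step of the back-cumulant adds to
   level l - 1/2 a function of level l + 1/2, which it leaves unchanged, so it
   is injective, and so is their composite.  Finally F(u) = 0 forces u = 0: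
   the measurements of a given level have nonempty pairwise disjoint
   supports, so on the support of S_j the level-(l_j - 1/2) component of F(u)
   is S_j or 0 according to u_j. *)

Lemma F2P (a : 'F_2) : a = 0 \/ a = 1.
Proof. by case: a => -[|[|//]] ?; [left|right]; apply/val_inj. Qed.

Lemma F2_addxx (a : 'F_2) : a + a = 0.
Proof. by case: (F2P a) => ->; [rewrite addr0|apply/val_inj]. Qed.

Lemma F2_addE (a b : 'F_2) : (a + b == 1) = (a == 1) (+) (b == 1).
Proof. by case: (F2P a) => ->; case: (F2P b) => ->; rewrite ?add0r ?addr0 ?F2_addxx. Qed.

Lemma F2_eq1 (a : 'F_2) : (a == 1) = (a != 0).
Proof. by case: (F2P a) => ->. Qed.

Lemma pauli_addxx n (P : pauli n) : P + P = 0.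
Proof.
apply/ffunP => q; rewrite !ffunE.
by case: (P q) => a b; congr (_, _); apply: F2_addxx.
Qed.

Lemma addmorph_inj (U V : zmodType) (f : U -> V) :
  {morph f : x y / x + y} -> (forall x, f x = 0 -> x = 0) -> injective f.
Proof.
move=> fD f_eq0 x y fxy; apply/eqP; rewrite -subr_eq0; apply/eqP/f_eq0.
by apply: (@addIr _ (f y)); rewrite -fD subrK fxy add0r.
Qed.

Lemma pairwise_pmap (T U : Type) (f : T -> option U) (r : rel T) (r' : rel U) :
  (forall x y a b, f x = Some a -> f y = Some b -> r x y -> r' a b) ->
  forall s, pairwise r s -> pairwise r' (pmap f s).
Proof.
move=> fr; elim=> [|x s IH] //= /andP[rx /IH{}IH].
case fx: (f x) => [a|] //=; rewrite IH andbT all_pmap.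
by apply: sub_all rx => y /=; case fy: (f y) => [b|] //; apply: fr fx fy.
Qed.

Lemma in_circ_cons n (o a : op n * nat) (s : circuit n) :
  in_circ o s -> in_circ o (a :: s).
Proof. by case=> i lt_i_s si; exists i.+1. Qed.

Lemma conjUD n (c : circuit n) l :
  (forall A g l', in_circ (Gate A g, l') c -> {morph g : P Q / P + Q}) ->
  {morph conjU c l : P Q / P + Q}.
Proof.
rewrite /conjU /gates_at; elim: c => [|[o l'] s IH] gD P Q //=.
have {}IH : {morph foldl (fun Q g => g Q) ^~ (gates_at s l) : P Q / P + Q}.
  by apply: IH => A g l'' /(in_circ_cons (o, l')); apply: gD.
case: o gD => [A g|Sm] gD /=; last exact: IH.
case: (l' == l) => /=; last exact: IH.
by rewrite (gD A g l') ?IH //; exists 0%N.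
Qed.

Lemma back_stepD n (c : circuit n) l :
  {morph conjU c l : P Q / P + Q} -> {morph @back_step n c l : F G / F + G}.
Proof.
move=> UD F G; apply/ffunP => i; rewrite !ffunE.
by case: ifP => // _; rewrite UD addrACA.
Qed.

Lemma back_cumulantD n (c : circuit n) :
  (forall l, {morph conjU c l : P Q / P + Q}) ->
  {morph @back_cumulant n c : F G / F + G}.
Proof.
move=> UD; rewrite /back_cumulant.
by elim: (rev _) => [|l s IH] //= F G; rewrite back_stepD.
Qed.

Lemma back_step_inj n (c : circuit n) l : (0 < l <= depth c)%N ->
  injective (@back_step n c l).
Proof.
move=> /andP[l_gt0 l_le] F G eqFG.
have comp_eq i : back_step l F i = back_step l G i by rewrite eqFG.
have eq_l : F (inord l) = G (inord l).
  by have := comp_eq (inord l); rewrite !ffunE inordK ?ltnS // gtn_eqF ?ltn_predL.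
apply/ffunP => i; have := comp_eq i; rewrite !ffunE.
by case: ifP => // _; rewrite eq_l; apply: addIr.
Qed.

Lemma back_cumulant_inj n (c : circuit n) : injective (@back_cumulant n c).
Proof.
rewrite /back_cumulant.
have : all (fun l => 0 < l <= depth c)%N (rev (iota 1 (depth c))).
  by apply/allP => l; rewrite mem_rev mem_iota add1n ltnS.
elim: (rev _) => [_ F G //|l s IH /andP[l_range /IH s_inj] F G /s_inj].
exact: back_step_inj.
Qed.

Lemma F_ofD n (c : circuit n) : {morph @F_of n c : u v / u + v}.
Proof.
move=> u v; apply/ffunP => i; rewrite !ffunE -big_split /=.
apply: eq_bigr => j _; rewrite ffunE F2_addE.
by case: (u j == 1); case: (v j == 1); rewrite /= ?addr0 ?add0r ?pauli_addxx.
Qed.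

Lemma level_le_depth n (c : circuit n) : all (fun o : op n * nat => o.2 <= depth c)%N c.
Proof.
elim: c => //= a s IH; rewrite leq_maxl /=.
by apply: sub_all IH => o /leq_trans; apply; apply: leq_maxr.
Qed.

Section Measurements.

Variables (n : nat) (c : circuit n).
Hypothesis c_valid : valid_circuit c.

Lemma meas_list_valid :
  all (fun m : pauli n * nat => [&& (0 < m.2)%N, (m.2 <= depth c)%N & m.1 != 0])
      (meas_list c).
Proof.
case: c_valid => levels_gt0 _ _ _ meas_neq0.
rewrite all_pmap; apply/(all_nthP (Meas 0, 0%N)) => i lt_i_c.
have := all_nthP (Meas 0, 0%N) levels_gt0 i lt_i_c.
have := all_nthP (Meas 0, 0%N) (level_le_depth c) i lt_i_c.
case Ei: (nth _ c i) => [[A g|Sm] l] //= -> ->.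
by apply: (meas_neq0 Sm l); exists i.
Qed.

Lemma meas_list_disjoint :
  pairwise (fun a b : pauli n * nat =>
              (a.2 == b.2) ==> [disjoint psupport a.1 & psupport b.1])
           (meas_list c).
Proof.
case: c_valid => _ _ disj _ _.
apply: (@pairwise_pmap _ _ _ (fun a b : op n * nat => (a.2 == b.2) ==>
          [disjoint op_support a.1 & op_support b.1])).
  by move=> [[A g|S] l] [[A' g'|S'] l'] // a b [<-] [<-].
apply/(pairwiseP (Meas 0, 0%N)) => i j; rewrite !inE => lt_i lt_j lt_ij.
by apply/implyP => /eqP; apply: disj; rewrite lt_ij.
Qed.

Lemma meas_valid (j : 'I_(nmeas c)) :
  [/\ (0 < meas_l c j)%N, (meas_l c j <= depth c)%N & meas_S c j != 0].
Proof. by have /and3P[] := all_nthP (0, 0%N) meas_list_valid j (ltn_ord j). Qed.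

Lemma meas_disjoint (j j' : 'I_(nmeas c)) :
  j != j' -> meas_l c j = meas_l c j' ->
  [disjoint psupport (meas_S c j) & psupport (meas_S c j')].
Proof.
move=> neq_jj' eq_l; have /(pairwiseP (0, 0%N)) disj := meas_list_disjoint.
have [lt_jj'|lt_j'j|/val_inj eq_jj'] := ltngtP j j'.
- by have /implyP := disj j j' (ltn_ord j) (ltn_ord j') lt_jj'; apply; apply/eqP.
- rewrite disjoint_sym.
  by have /implyP := disj j' j (ltn_ord j') (ltn_ord j) lt_j'j; apply; apply/eqP.
- by rewrite eq_jj' eqxx in neq_jj'.
Qed.

Lemma F_of_meas_support (w : {ffun 'I_(nmeas c) -> 'F_2}) (j : 'I_(nmeas c)) q :
  q \in psupport (meas_S c j) ->
  F_of w (inord (meas_l c j).-1) q = if w j == 1 then meas_S c j q else 0.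
Proof.
move=> q_Sj; have [lj_gt0 lj_le _] := meas_valid j.
have le_pred : ((meas_l c j).-1 < (depth c).+1)%N.
  by rewrite ltnS (leq_trans (leq_pred _) lj_le).
rewrite ffunE sum_ffunE (bigD1 j) ?inordK //= big1 ?addr0.
  by case: ifP => //; rewrite ffunE.
move=> j' /andP[/eqP eq_lvl neq_j'j]; case: ifP => _; last by rewrite ffunE.
have [lj'_gt0 _ _] := meas_valid j'.
have eq_l : meas_l c j' = meas_l c j.
  by rewrite -(prednK lj'_gt0) -(prednK lj_gt0) eq_lvl.
have := disjointFl (meas_disjoint neq_j'j eq_l) q_Sj.
by rewrite inE => /negbFE/eqP.
Qed.

Lemma F_of_eq0 (w : {ffun 'I_(nmeas c) -> 'F_2}) : F_of w = 0 -> w = 0.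
Proof.
move=> Fw0; apply/ffunP => j; rewrite ffunE; apply/eqP.
rewrite -[_ == 0]negbK -F2_eq1; apply/negP => wj.
have [_ _ Sj_neq0] := meas_valid j.
have [q] : exists q, q \in psupport (meas_S c j).
  apply/existsP; apply: contraR Sj_neq0 => /existsPn Sj0.
  by apply/eqP/ffunP => q; have := Sj0 q; rewrite inE ffunE negbK => /eqP.
move=> q_Sj; have := F_of_meas_support w q_Sj; rewrite inE in q_Sj.
by rewrite Fw0 wj !ffunE => /esym/eqP; apply/negP.
Qed.

Lemma F_of_inj : injective (@F_of n c).
Proof. exact: addmorph_inj (@F_ofD n c) F_of_eq0. Qed.

End Measurements.

Theorem mainTheorem9 (n : nat) (c : circuit n) :
  valid_circuit c ->
  {morph (fun u : {ffun 'I_(nmeas c) -> 'F_2} => back_cumulant (F_of u)) : u v / u + v}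
  /\ injective (fun u : {ffun 'I_(nmeas c) -> 'F_2} => back_cumulant (F_of u)).
Proof.
move=> c_valid; split; last exact: inj_comp (@back_cumulant_inj n c) (F_of_inj c_valid).
have UD l : {morph conjU c l : P Q / P + Q}.
  apply: conjUD => A g l' gc; case: c_valid => _ _ _ gates _.
  by case: (gates A g l' gc).
by move=> u v /=; rewrite F_ofD back_cumulantD.
Qed.
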